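(* Let $h_1,\dots,h_{n-k}$ be the generators of a valid rate-$k/n$ quantum convolutional code and suppose its memory commutativity matrix $\Omega$ has full rank over $\mathbb{F}_2$. Let $m=\dim(\Omega)-\frac12\mathrm{rank}(\Omega)$, let $g_{i,j}$ be $m$-qubit Pauli operators with $g_{i,j}\odot g_{i',j'}=[\Omega]_{(i,j),(i',j')}$, and let $U$ be any Clifford unitary on $m+n$ qubits implementing the encoding transformation with these memory operators. Then $U$ is non-catastrophic.
   Context: Pauli operators are considered up to phase; $A\odot B\in\{0,1\}$ is $1$ iff $A,B$ anticommute, additive mod 2 over tensor factors. The weight of a Pauli operator is its number of non-identity tensor factors. A rate-$k/n$ quantum convolutional code is given by $n-k$ generators $h_i=(h_{i,1}|\cdots|h_{i,l_i})$ of $n$-qubit Pauli operators (frames of $n$ qubits) and all their frame shifts; it is valid if all these pairwise commute, i.e. $\sum_r h_{i,r+t}\odot h_{i',r}=0$ for all $i,i',t$ (with $h_{i,j}=I^{\otimes n}$ outside $1\le j\le l_i$). Encoding transformation: a Clifford unitary $U$ acting on $m$ memory, $n-k$ ancilla and $k$ information qubits and outputting $n$ physical and $m$ memory qubits implements it if, for each $1\le i\le n-k$ and $0\le j\le l_i-1$, $U$ maps $g_{i,j}\otimes A_{i,j}\otimes I^{\otimes k}$ to $h_{i,j+1}\otimes g_{i,j+1}$ (up to phase), where $g_{i,0}=g_{i,l_i}=I^{\otimes m}$, $A_{i,0}=Z_i$ (Pauli $Z$ on the $i$-th ancilla), $A_{i,j}=I^{\otimes(n-k)}$ for $j\ge1$,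 and $g_{i,j}$ ($1\le j\le l_i-1$) are $m$-qubit Pauli operators. Memory commutativity matrix $\Omega$: the symmetric binary matrix indexed by $(i,j)$, $1\le i\le n-k$, $1\le j\le l_i-1$, with entries $g_{i,j}\odot g_{i',j'}$, which are forced by consistency of commutation relations and equal, for $j\ge j'$, $\sum_{r\ge1}h_{i,j+r}\odot h_{i',j'+r}$; $\dim(\Omega)$ is its number of rows. State diagram of $U$: a directed multigraph whose vertices are the $m$-qubit Pauli operators (memory states); there is an edge from $M$ to $M'$ labeled $(L,P)$ whenever $U$ maps $M\otimes S^z\otimes L$ to $P\otimes M'$ for some $S^z\in\{I,Z\}^{\otimes(n-k)}$ on the ancillas, $k$-qubit Pauli $L$ on the information qubits and $n$-qubit Pauli $P$ on the physical qubits. The physical (logical) weight of the edge is the weight of $P$ (of $L$). $U$ is catastrophic if its state diagram has a cycle all of whose edges have zero physical weight and at least one edge has nonzero logical weight; otherwise it is non-catastrophic. *)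

From mathcomp Require Import all_boot all_order all_algebra.
Set Implicit Arguments. Unset Strict Implicit. Unset Printing Implicit Defensive.
Import GRing.Theory.

(* Pauli operators up to phase on a finite set T of qubits, in binary
   symplectic form: each qubit carries (x-bit, z-bit);
   I = (false,false), X = (true,false), Z = (false,true), Y = (true,true). *)
Definition Pauli (T : finType) := {ffun T -> bool * bool}.

Definition pid (T : finType) : Pauli T := [ffun _ => (false, false)].

Definition pmul (T : finType) (P Q : Pauli T) : Pauli T :=
  [ffun q => ((P q).1 (+) (Q q).1, (P q).2 (+) (Q q).2)].

Definition pZ (T : finType) (i : T) : Pauli T := [ffun q => (false, q == i)].

(* A (.) B : true iff A and B anticommute (additive mod 2 over factors) *)
Definition sp (T : finType) (P Q : Pauli T) : bool :=
  \big[addb/false]_(q : T) (((P q).1 && (Q q).2) (+) ((P q).2 && (Q q).1)).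

Definition weight (T : finType) (P : Pauli T) : nat :=
  #|[set q | P q != (false, false)]|.

Definition tensor (T1 T2 : finType) (P : Pauli T1) (Q : Pauli T2)
  : Pauli (T1 + T2)%type :=
  [ffun s => match s with inl a => P a | inr b => Q b end].

(* A Clifford unitary, considered up to phase, acting on Paulis by
   conjugation: a bijective map on Paulis preserving products and
   commutation relations (i.e. a symplectic automorphism). *)
Definition clifford (TI TO : finType) (U : Pauli TI -> Pauli TO) : Prop :=
  [/\ bijective U,
      (forall P Q, U (pmul P Q) = pmul (U P) (U Q)) &
      (forall P Q, sp (U P) (U Q) = sp P Q)].

(* Generators h i = (h i 1 | ... | h i (l i)), i : 'I_(n-k), each frame an
   n-qubit Pauli; h i j for j = 0 or j > l i is the identity. *)
Definition valid_code (n k : nat) (l : 'I_(n - k) -> nat)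
  (h : 'I_(n - k) -> nat -> Pauli 'I_n) : Prop :=
  [/\ (forall i, 0 < l i),
      (forall i j, (j == 0) || (l i < j) -> h i j = pid _) &
      (forall i i' t,
         \big[addb/false]_(0 <= r < (l i').+1) sp (h i (r + t)) (h i' r)
         = false)].

Definition omega_sum (n k : nat) (l : 'I_(n - k) -> nat)
  (h : 'I_(n - k) -> nat -> Pauli 'I_n) (i : 'I_(n - k)) (j : nat)
  (i' : 'I_(n - k)) (j' : nat) : bool :=
  \big[addb/false]_(1 <= r < (l i + l i').+1) sp (h i (j + r)) (h i' (j' + r)).

Definition omega_entry (n k : nat) (l : 'I_(n - k) -> nat)
  (h : 'I_(n - k) -> nat -> Pauli 'I_n) (i : 'I_(n - k)) (j : nat)
  (i' : 'I_(n - k)) (j' : nat) : bool :=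
  if j' <= j then omega_sum l h i j i' j' else omega_sum l h i' j' i j.

Definition memidx (n k : nat) (l : 'I_(n - k) -> nat) :=
  {p : 'I_(n - k) * 'I_(\max_(i : 'I_(n - k)) l i) | (0 < p.2) && (p.2 < l p.1)}.

Definition dimOmega (n k : nat) (l : 'I_(n - k) -> nat) : nat := #|{: memidx l}|.

Definition Omega (n k : nat) (l : 'I_(n - k) -> nat)
  (h : 'I_(n - k) -> nat -> Pauli 'I_n) : 'M['F_2]_(dimOmega l) :=
  \matrix_(a, b)
    ((omega_entry l h (val (@enum_val _ {: memidx l} a)).1 (val (@enum_val _ {: memidx l} a)).2
                     (val (@enum_val _ {: memidx l} b)).1 (val (@enum_val _ {: memidx l} b)).2)%:R)%R.

Definition memory_ops (n k m : nat) (l : 'I_(n - k) -> nat)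
  (h : 'I_(n - k) -> nat -> Pauli 'I_n) (g : 'I_(n - k) -> nat -> Pauli 'I_m)
  : Prop :=
  [/\ (forall i, g i 0 = pid _), (forall i, g i (l i) = pid _) &
      (forall i j i' j', 0 < j < l i -> 0 < j' < l i' ->
         sp (g i j) (g i' j') = omega_entry l h i j i' j')].

(* Input qubits: (memory 'I_m + ancillas 'I_(n-k)) + information 'I_k;
   output qubits: physical 'I_n + memory 'I_m. *)
Definition encodes (n k m : nat) (l : 'I_(n - k) -> nat)
  (h : 'I_(n - k) -> nat -> Pauli 'I_n) (g : 'I_(n - k) -> nat -> Pauli 'I_m)
  (U : Pauli (('I_m + 'I_(n - k)) + 'I_k)%type -> Pauli ('I_n + 'I_m)%type)
  : Prop :=
  forall i j, j < l i ->
    U (tensor (tensor (g i j) (if j == 0 then pZ i else pid _)) (pid _))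
    = tensor (h i j.+1) (g i j.+1).

Definition zonly (T : finType) (S : Pauli T) : Prop := forall q, (S q).1 = false.

Definition sd_edge (n k m : nat)
  (U : Pauli (('I_m + 'I_(n - k)) + 'I_k)%type -> Pauli ('I_n + 'I_m)%type)
  (M M' : Pauli 'I_m) (L : Pauli 'I_k) (P : Pauli 'I_n) : Prop :=
  exists S : Pauli 'I_(n - k), zonly S /\ U (tensor (tensor M S) L) = tensor P M'.

Definition catastrophic (n k m : nat)
  (U : Pauli (('I_m + 'I_(n - k)) + 'I_k)%type -> Pauli ('I_n + 'I_m)%type)
  : Prop :=
  exists (len : nat) (Ms : nat -> Pauli 'I_m) (Ls : nat -> Pauli 'I_k)
         (Ps : nat -> Pauli 'I_n),
    [/\ 0 < len, Ms len = Ms 0,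
        (forall t, t < len -> sd_edge U (Ms t) (Ms t.+1) (Ls t) (Ps t)),
        (forall t, t < len -> weight (Ps t) = 0) &
        (exists2 t, t < len & weight (Ls t) != 0)].

From mathcomp Require Import all_boot all_order all_algebra.
From mathcomp Require Import zify.
Set Implicit Arguments. Unset Strict Implicit. Unset Printing Implicit Defensive.
Import GRing.Theory Num.Theory.

(* Compare an edge of zero physical weight with the encoding relations: as U
   preserves commutation, the memory state M_t anticommutes with g_{i,j} iff
   M_{t+1} anticommutes with g_{i,j+1}.  Going round the cycle (extended
   periodically) up to j = l_i, where g_{i,l_i} = I, every memory state on the
   cycle commutes with every g_{i,j}.  The nonsingular matrix Omega is the Gram
   matrix of the g_{i,j} for the symplectic form; it lifts to a skew-symmetric
   integer matrix, so dim Omega is even, dim Omega = 2m, and the g_{i,j} span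
   all of F_2^{2m}.  Hence all memory states are the identity, and an edge from
   I to I with trivial physical output has a trivial logical label since U is
   injective. *)

Lemma sp_tensor (T1 T2 : finType) (A C : Pauli T1) (B D : Pauli T2) :
  sp (tensor A B) (tensor C D) = sp A C (+) sp B D.
Proof. by rewrite /sp big_sumType; congr addb; apply: eq_bigr => q _; rewrite !ffunE. Qed.

Lemma sp_pidl (T : finType) (P : Pauli T) : sp (pid T) P = false.
Proof. by rewrite /sp big1 // => q _; rewrite ffunE. Qed.

Lemma sp_pidr (T : finType) (P : Pauli T) : sp P (pid T) = false.
Proof. by rewrite /sp big1 // => q _; rewrite ffunE /= !andbF. Qed.

Lemma sp_zonly (T : finType) (S A : Pauli T) : zonly S -> zonly A -> sp S A = false.
Proof. by move=> zS zA; rewrite /sp big1 // => q _; rewrite zS zA !andbF. Qed.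

Lemma zonly_pZ (T : finType) (i : T) : zonly (pZ i).
Proof. by move=> q; rewrite ffunE. Qed.

Lemma zonly_pid (T : finType) : zonly (pid T).
Proof. by move=> q; rewrite ffunE. Qed.

Lemma weight_eq0 (T : finType) (P : Pauli T) : (weight P == 0) = (P == pid T).
Proof.
rewrite /weight cards_eq0; apply/eqP/eqP => [P0 | ->].
  apply/ffunP => q; rewrite ffunE; apply/eqP/negPn/negP => Pq.
  by have := in_set0 q; rewrite -P0 inE Pq.
by apply/setP => q; rewrite !inE ffunE eqxx.
Qed.

Lemma tensor_pid (T1 T2 : finType) : tensor (pid T1) (pid T2) = pid _.
Proof. by apply/ffunP => -[q|q]; rewrite !ffunE. Qed.

Lemma tensor_eq_pid_r (T1 T2 : finType) (A : Pauli T1) (B : Pauli T2) :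
  tensor A B = pid _ -> B = pid _.
Proof.
move=> AB0; apply/ffunP => q.
by have := congr1 (fun P : Pauli (T1 + T2)%type => P (inr q)) AB0; rewrite !ffunE.
Qed.

Lemma clifford_pid (TI TO : finType) (U : Pauli TI -> Pauli TO) :
  clifford U -> U (pid _) = pid _.
Proof.
case=> _ U_mul _; have pidM T : pid T = pmul (pid T) (pid T).
  by apply/ffunP => q; rewrite !ffunE.
rewrite {1}pidM U_mul; apply/ffunP => q; rewrite !ffunE.
by case: (U (pid TI) q) => a b /=; rewrite !addbb.
Qed.

Lemma modn_cycle (T : Type) (len t : nat) (x : nat -> T) :
  0 < len -> x len = x 0 -> x (t.+1 %% len) = x (t %% len).+1.
Proof.
move=> len_gt0 x_len; rewrite -addn1 -modnDml addn1.
have := ltn_pmod t len_gt0; rewrite leq_eqVlt => /predU1P[-> | lt_tlen].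
  by rewrite modnn x_len.
by rewrite modn_small.
Qed.

Local Open Scope ring_scope.

Lemma natr_addb (a b : bool) : ((a (+) b)%:R : 'F_2) = a%:R + b%:R.
Proof. by case: a; case: b => //=; rewrite ?add0r ?addr0 //; apply/val_inj. Qed.

Lemma natr_andb (R : pzSemiRingType) (a b : bool) : ((a && b)%:R : R) = a%:R * b%:R.
Proof. by case: a; case: b; rewrite /= ?mul0r ?mulr0 ?mul1r. Qed.

Lemma natr_big_addb (I : Type) (r : seq I) (P : pred I) (F : I -> bool) :
  ((\big[addb/false]_(i <- r | P i) F i)%:R : 'F_2) = \sum_(i <- r | P i) (F i)%:R.
Proof. exact: (big_morph (fun b : bool => (b%:R : 'F_2)) natr_addb). Qed.

Lemma natr_bool_eq0 (R : nzSemiRingType) (b : bool) : ((b%:R : R) == 0) = ~~ b.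
Proof. by case: b; rewrite ?oner_eq0 ?eqxx. Qed.

Definition pbit m (P : Pauli 'I_m) (q : 'I_(m + m)) : bool :=
  match split q with inl i => (P i).1 | inr i => (P i).2 end.

Definition pvec (R : pzSemiRingType) m (P : Pauli 'I_m) : 'rV[R]_(m + m) :=
  \row_q (pbit P q)%:R.

Definition symp_mx (R : pzRingType) m : 'M[R]_(m + m) := block_mx 0 1%:M (- 1%:M) 0.

Lemma pvec_row_mx (R : pzSemiRingType) m (P : Pauli 'I_m) :
  pvec R P = row_mx (\row_i ((P i).1)%:R) (\row_i ((P i).2)%:R).
Proof. by apply/rowP => q; rewrite !mxE /pbit; case: split => i; rewrite mxE. Qed.

Lemma pvec_eq0 (R : nzSemiRingType) m (P : Pauli 'I_m) : pvec R P = 0 -> P = pid _.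
Proof.
move=> P0; apply/ffunP => i; rewrite ffunE.
have := congr1 (fun v : 'rV_(m + m) => v 0 (lshift m i)) P0.
have := congr1 (fun v : 'rV_(m + m) => v 0 (rshift m i)) P0.
rewrite /= !mxE /pbit (unsplitK (inl _ _)) (unsplitK (inr _ _)).
by case: (P i) => a b /= /eqP + /eqP; rewrite !natr_bool_eq0 => /negPf-> /negPf->.
Qed.

Lemma symp_mxK (R : pzRingType) m : symp_mx R m *m symp_mx R m = - 1%:M.
Proof.
rewrite /symp_mx mulmx_block !mulmx0 !mul0mx !mulmx1 !mulmxN !mulmx1 !addr0 !add0r.
by rewrite scalar_mx_block opp_block_mx !oppr0.
Qed.

Lemma map_symp_mx (R S : pzRingType) (f : {rmorphism R -> S}) m :
  map_mx f (symp_mx R m) = symp_mx S m.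
Proof. by rewrite /symp_mx map_block_mx !map_mx0 map_mxN map_mx1. Qed.

Lemma tr_symp_mx (R : pzRingType) m : (symp_mx R m)^T = - symp_mx R m.
Proof.
rewrite /symp_mx tr_block_mx !trmx0 tr_scalar_mx linearN /= tr_scalar_mx.
by rewrite opp_block_mx !oppr0 opprK.
Qed.

Lemma sp_pvec m (P Q : Pauli 'I_m) :
  (pvec 'F_2 P *m symp_mx 'F_2 m *m (pvec 'F_2 Q)^T) 0 0 = (sp P Q)%:R.
Proof.
rewrite !pvec_row_mx /symp_mx mul_row_block !mulmx0 mulmxN !mulmx1 add0r addr0.
rewrite tr_row_mx mul_row_col mulNmx addrC !mxE (oppr_pchar2 (pchar_Fp _)) //.
rewrite /sp natr_big_addb -big_split /=; apply: eq_bigr => q _.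
by rewrite natr_addb !natr_andb !mxE.
Qed.

Lemma det_skew_odd (R : numDomainType) N (B : 'M[R]_N) :
  B^T = - B -> odd N -> \det B = 0.
Proof.
move=> B_skew odd_N; have := det_tr B.
rewrite B_skew -scaleN1r detZ -signr_odd odd_N expr1 mulN1r => detN.
have : \det B *+ 2 == 0 by rewrite mulr2n -{1}detN addNr.
by rewrite mulrn_eq0 => /eqP.
Qed.

Section GramMatrix.
Variables (D : finType) (m : nat) (g : D -> Pauli 'I_m).

Definition pauli_mx (R : pzSemiRingType) : 'M[R]_(#|{: D}|, m + m) :=
  \matrix_(a, q) (pbit (g (enum_val a)) q)%:R.

Definition gram_mx : 'M['F_2]_#|{: D}| :=
  \matrix_(a, b) (sp (g (enum_val a)) (g (enum_val b)))%:R.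

Lemma row_pauli_mx (R : pzSemiRingType) a : row a (pauli_mx R) = pvec R (g (enum_val a)).
Proof. by apply/rowP => q; rewrite !mxE. Qed.

Lemma map_pauli_mx (R S : pzSemiRingType) (f : {rmorphism R -> S}) :
  map_mx f (pauli_mx R) = pauli_mx S.
Proof. by apply/matrixP => a q; rewrite !mxE rmorph_nat. Qed.

Lemma gram_mxE : gram_mx = pauli_mx _ *m symp_mx _ m *m (pauli_mx _)^T.
Proof.
apply/matrixP => a b; rewrite mxE -sp_pvec -!row_pauli_mx -row_mul !mxE.
by apply: eq_bigr => q _; rewrite !mxE.
Qed.

(* The Gram matrix lifts to the skew-symmetric integer matrix of the standard
   symplectic form, whose determinant vanishes in odd dimension. *)
Lemma gram_mx_even : \rank gram_mx = #|{: D}| -> ~~ odd #|{: D}|.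
Proof.
move=> gram_full; apply/negP => odd_D.
pose B := pauli_mx int *m symp_mx int m *m (pauli_mx int)^T.
have B_lift : map_mx intr B = gram_mx.
  by rewrite gram_mxE /B !map_mxM map_symp_mx -map_trmx map_pauli_mx.
have B_skew : B^T = - B.
  by rewrite /B !trmx_mul trmxK tr_symp_mx mulNmx mulmxN mulmxA.
have : gram_mx \in unitmx by rewrite -row_free_unit /row_free gram_full.
by rewrite unitmxE -B_lift det_map_mx (det_skew_odd B_skew odd_D) rmorph0 unitr0.
Qed.

Lemma gram_mx_commutant (M : Pauli 'I_m) :
  \rank gram_mx = #|{: D}| -> (m + m <= #|{: D}|)%N ->
  (forall a, sp M (g a) = false) -> M = pid _.
Proof.
move=> gram_full m_le M_comm; pose G := pauli_mx 'F_2.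
have rank_G : \rank G = (m + m)%N.
  apply/eqP; rewrite eqn_leq rank_leq_col /=.
  have : (\rank gram_mx <= \rank G)%N.
    by rewrite gram_mxE; exact: leq_trans (mxrankM_maxl _ _) (mxrankM_maxl _ _).
  by rewrite gram_full => /(leq_trans m_le).
have G_free : row_free G^T by rewrite /row_free mxrank_tr rank_G.
have MJ0 : pvec 'F_2 M *m symp_mx _ m = 0.
  apply: (row_free_inj G_free); rewrite mul0mx; apply/rowP => a.
  rewrite [RHS]mxE -[0 : 'F_2]/(false%:R) -(M_comm (enum_val a)).
  rewrite -sp_pvec -row_pauli_mx !mxE.
  by apply: eq_bigr => q _; rewrite !mxE.
apply: (@pvec_eq0 'F_2).
by rewrite -[pvec _ M]mulmx1 -[1%:M]opprK -symp_mxK mulmxN mulmxA MJ0 mul0mx oppr0.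
Qed.

End GramMatrix.

Local Close Scope ring_scope.

Lemma Omega_gram_mx (n k m : nat) (l : 'I_(n - k) -> nat)
    (h : 'I_(n - k) -> nat -> Pauli 'I_n) (g : 'I_(n - k) -> nat -> Pauli 'I_m) :
  memory_ops l h g -> Omega l h = gram_mx (fun a : memidx l => g (val a).1 (val a).2).
Proof.
case=> _ _ g_sp; apply/matrixP => a b; rewrite !mxE.
by rewrite g_sp ?(valP (enum_val a)) ?(valP (enum_val b)).
Qed.

Lemma double_memory_dimOmega (n k m : nat) (l : 'I_(n - k) -> nat)
    (h : 'I_(n - k) -> nat -> Pauli 'I_n) (g : 'I_(n - k) -> nat -> Pauli 'I_m) :
  memory_ops l h g -> \rank (Omega l h) = dimOmega l ->
  m = dimOmega l - \rank (Omega l h) %/ 2 -> m + m = dimOmega l.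
Proof.
move=> g_mem Omega_full ->; rewrite Omega_full divn2.
have := Omega_full; rewrite (Omega_gram_mx g_mem) => /gram_mx_even /even_halfK.
by rewrite -/(dimOmega l) -muln2; lia.
Qed.

Section Encoder.
Variables (n k m : nat) (l : 'I_(n - k) -> nat) (h : 'I_(n - k) -> nat -> Pauli 'I_n).
Variables (g : 'I_(n - k) -> nat -> Pauli 'I_m)
  (U : Pauli (('I_m + 'I_(n - k)) + 'I_k)%type -> Pauli ('I_n + 'I_m)%type).
Hypotheses (U_sp : forall P Q, sp (U P) (U Q) = sp P Q) (U_enc : encodes l h g U).

(* On the input side the ancilla parts are both Z-type and the encoded operator
   is trivial on the information qubits, so only the memory parts contribute. *)
Lemma sd_edge_sp M M' L i j :
  sd_edge U M M' L (pid _) -> j < l i -> sp M (g i j) = sp M' (g i j.+1).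
Proof.
case=> S [zS UMSL] lt_j; have := U_sp (tensor (tensor M S) L)
  (tensor (tensor (g i j) (if j == 0 then pZ i else pid _)) (pid _)).
have zA : zonly (if j == 0 then pZ i else pid 'I_(n - k)).
  by case: (j == 0); [exact: zonly_pZ | exact: zonly_pid].
by rewrite UMSL U_enc // !sp_tensor sp_pidl sp_pidr (sp_zonly zS zA) /= !addbF.
Qed.

Lemma weightless_walk_sp (Ms : nat -> Pauli 'I_m) :
  (forall i, g i (l i) = pid _) ->
  (forall t, exists L, sd_edge U (Ms t) (Ms t.+1) L (pid _)) ->
  forall t i j, j <= l i -> sp (Ms t) (g i j) = false.
Proof.
move=> g_l walk t i j le_j; move def_d: (l i - j) => d.
elim: d t j le_j def_d => [|d IHd] t j le_j def_d.
  have -> : j = l i by lia.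
  by rewrite g_l sp_pidr.
have [L edge] := walk t; have lt_j : j < l i by lia.
by rewrite (sd_edge_sp edge lt_j); apply: IHd; lia.
Qed.

Lemma weightless_walk_pid (Ms : nat -> Pauli 'I_m) :
  memory_ops l h g -> \rank (Omega l h) = dimOmega l -> m + m = dimOmega l ->
  (forall t, exists L, sd_edge U (Ms t) (Ms t.+1) L (pid _)) ->
  forall t, Ms t = pid _.
Proof.
move=> g_mem Omega_full mm_dim walk t; have [_ g_l _] := g_mem.
rewrite (Omega_gram_mx g_mem) in Omega_full.
apply: (gram_mx_commutant Omega_full); first by rewrite mm_dim.
case=> -[i j] /= /andP[_ lt_j].
exact: (weightless_walk_sp g_l walk _ (ltnW lt_j)).
Qed.

End Encoder.

Lemma sd_edge_pid (n k m : nat)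
    (U : Pauli (('I_m + 'I_(n - k)) + 'I_k)%type -> Pauli ('I_n + 'I_m)%type) L :
  clifford U -> sd_edge U (pid _) (pid _) L (pid _) -> L = pid _.
Proof.
move=> U_cl [S [_ U_SL]]; have [U_bij _ _] := U_cl.
move: U_SL; rewrite tensor_pid -(clifford_pid U_cl) => /(bij_inj U_bij).
exact: tensor_eq_pid_r.
Qed.

Theorem theorem3 (n k : nat) (l : 'I_(n - k) -> nat)
  (h : 'I_(n - k) -> nat -> Pauli 'I_n) (m : nat)
  (g : 'I_(n - k) -> nat -> Pauli 'I_m)
  (U : Pauli (('I_m + 'I_(n - k)) + 'I_k)%type -> Pauli ('I_n + 'I_m)%type) :
  k <= n ->
  valid_code l h ->
  \rank (Omega l h) = dimOmega l ->
  m = dimOmega l - (\rank (Omega l h)) %/ 2 ->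
  memory_ops l h g ->
  clifford U ->
  encodes l h g U ->
  ~ catastrophic U.
Proof.
move=> _ _ Omega_full def_m g_mem U_cl U_enc.
case=> len [Ms [Ls [Ps [len_gt0 Ms_cycle edge weight_P [t0 lt_t0 weight_L]]]]].
have [_ _ U_sp] := U_cl.
have P_pid t : t < len -> Ps t = pid _.
  by move=> /weight_P/eqP; rewrite weight_eq0 => /eqP.
pose Mp t := Ms (t %% len).
have walk t : exists L, sd_edge U (Mp t) (Mp t.+1) L (pid _).
  have lt_t := ltn_pmod t len_gt0.
  by exists (Ls (t %% len)); rewrite /Mp modn_cycle // -(P_pid _ lt_t); apply: edge.
have Mp_pid := weightless_walk_pid U_sp U_enc g_mem Omega_full
  (double_memory_dimOmega g_mem Omega_full def_m) walk.
have Ms_t0 : Ms t0 = pid _ by rewrite -(modn_small lt_t0); apply: Mp_pid.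
have Ms_t0S : Ms t0.+1 = pid _.
  by rewrite -(modn_small lt_t0) -(modn_cycle t0 len_gt0 Ms_cycle); apply: Mp_pid.
have := edge _ lt_t0; rewrite Ms_t0 Ms_t0S P_pid // => /(sd_edge_pid U_cl) L_pid.
by move: weight_L; rewrite L_pid weight_eq0 eqxx.
Qed.
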